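(* Let $G$ be a triangle-free graph and let $H_G$ be the graph with $V(H_G)=V(G)\cup\{a,b,c,d\}$ (four new vertices) and $E(H_G)=E(G)\cup\{ab,cd\}\cup E'$, where $E'=\{bv: v\in V(G)\}\cup\{cv: v\in V(G)\}$. Then there exists a line geodetic set $Q$ of $H_G$ of minimum cardinality such that $Q\cap E'=\emptyset$.
   Context: All graphs are finite, simple and undirected. The line graph $L(G)$ has vertex set $E(G)$, two edges adjacent iff they share an endpoint. For a graph $H$, a set $S\subseteq E(H)$ is a line geodetic set of $H$ if every edge of $E(H)\setminus S$ lies on some shortest path in $L(H)$ between two edges of $S$; equivalently, $S$ is a geodetic set of $L(H)$, where a set $T$ of vertices of a graph $F$ is geodetic if every vertex of $F$ lies on some shortest path between two vertices of $T$. *)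

From mathcomp Require Import all_boot.
Set Implicit Arguments. Unset Strict Implicit. Unset Printing Implicit Defensive.

Section Generic.
Variable W : finType.
Variable r : rel W.

Definition is_walk (u v : W) (p : seq W) : bool := path r u p && (last u p == v).

Definition shortest_path (u v : W) (p : seq W) : Prop :=
  is_walk u v p /\ forall q, is_walk u v q -> size p <= size q.

Definition on_geodesic (u v x : W) : Prop :=
  exists p, shortest_path u v p /\ x \in u :: p.

Definition geodetic_set (T : {set W}) : Prop :=
  forall x : W, exists u v, [/\ u \in T, v \in T & on_geodesic u v x].
End Generic.

Section Line.
Variable V : finType.
Variable h : rel V.

Definition is_edge (s : {set V}) : bool :=
  [exists x, exists y, h x y && (s == [set x; y])].

Definition edge_type := {s : {set V} | is_edge s}.

Definition line_rel : rel edge_type :=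
  fun e1 e2 => (val e1 != val e2) && (val e1 :&: val e2 != set0).

Definition line_geodetic_set (S : {set edge_type}) : Prop :=
  geodetic_set line_rel S.
End Line.

Definition triangle_free (T : finType) (e : rel T) : Prop :=
  forall x y z, ~ [&& e x y, e y z & e x z].

(* V(H_G) = V(G) + {a,b,c,d}, with a,b,c,d = inr 0, inr 1, inr 2, inr 3 *)
Definition HV (T : finType) : finType := (T + 'I_4)%type.

Definition Hrel (T : finType) (e : rel T) : rel (HV T) :=
  fun x y =>
    match x, y with
    | inl u, inl v => e u v
    | inr i, inr j =>
        [|| (nat_of_ord i == 0) && (nat_of_ord j == 1),
            (nat_of_ord i == 1) && (nat_of_ord j == 0),
            (nat_of_ord i == 2) && (nat_of_ord j == 3)
          | (nat_of_ord i == 3) && (nat_of_ord j == 2)]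
    | inl _, inr i => (nat_of_ord i == 1) || (nat_of_ord i == 2)
    | inr i, inl _ => (nat_of_ord i == 1) || (nat_of_ord i == 2)
    end.

Definition vb (T : finType) : HV T := inr (@Ordinal 4 1 isT).
Definition vc (T : finType) : HV T := inr (@Ordinal 4 2 isT).

Definition Eprime (T : finType) (e : rel T) : {set edge_type (Hrel e)} :=
  [set f : edge_type (Hrel e) | [exists v : T,
      (val f == [set vb T; inl v]) || (val f == [set vc T; inl v])]].

From mathcomp Require Import all_boot.
From Stdlib Require Import Classical_Prop.
Set Implicit Arguments. Unset Strict Implicit. Unset Printing Implicit Defensive.

(* The edges ab and cd are pendant in H_G, so their neighbourhoods in L(H_G) are
   cliques and they belong to every line geodetic set; they are at distance 3 in
   L(H_G), and every edge of E' lies on a geodesic between them.  Hence in a minimum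
   line geodetic set each edge bv or cv can be swapped for an edge of G at v (or for
   ab if v is isolated) without increasing the size.  The swapped set still covers
   the edges of G: an edge of E' is within distance 2 of every edge, so a G-edge x
   covered through it is the middle of a geodesic u - x - w, and triangle-freeness of
   G keeps x between the swapped ends. *)

Section Geodesics.
Variables (W : finType) (r : rel W).

Lemma on_geodesic_refl u : on_geodesic r u u u.
Proof.
exists [::]; split; last by rewrite inE eqxx.
by split; first by rewrite /is_walk /= eqxx.
Qed.

Lemma on_geodesic_dist2 u x w :
  r u x -> r x w -> u != w -> ~~ r u w -> on_geodesic r u w x.
Proof.
move=> ux xw uw nuw; exists [:: x; w]; split; last by rewrite !inE eqxx orbT.
split=> [|[|y [|z q]]] //=; first by rewrite /is_walk /= ux xw eqxx.
- by rewrite /is_walk /= => /eqP E; rewrite E eqxx in uw.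
- by rewrite /is_walk /= andbT => /andP [uy /eqP E]; rewrite -E uy in nuw.
Qed.

Lemma on_geodesic_dist3 u y z w :
  r u y -> r y z -> r z w -> u != w -> ~~ r u w ->
  (forall m, r u m -> r m w -> False) ->
  on_geodesic r u w y /\ on_geodesic r u w z.
Proof.
move=> uy yz zw uw nuw no_mid.
have sp : shortest_path r u w [:: y; z; w].
  split=> [|[|y1 [|z1 [|t q]]]] //=; first by rewrite /is_walk /= uy yz zw eqxx.
  - by rewrite /is_walk /= => /eqP E; rewrite E eqxx in uw.
  - by rewrite /is_walk /= andbT => /andP [uy1 /eqP E]; rewrite -E uy1 in nuw.
  - rewrite /is_walk /= andbT => /andP [/andP [uy1 y1z1] /eqP E].
    by case: (no_mid y1); rewrite -?E.
by split; exists [:: y; z; w]; split; rewrite ?inE ?eqxx ?orbT.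
Qed.

(* Otherwise the shortest path could be shortened around x. *)
Lemma on_geodesic_inner u w x : on_geodesic r u w x -> x != u -> x != w ->
  exists y z, [/\ r y x, r x z, y != z & ~~ r y z].
Proof.
case=> p [[/andP [pp /eqP lp] sh] xp] xu xw.
rewrite inE (negbTE xu) /= in xp.
case/splitPr: xp pp lp sh => p1 p2.
rewrite cat_path last_cat /= => /andP [pp1 /andP [yx pp2]] lp sh.
case: p2 pp2 lp sh => [|z p3] /=; first by move=> _ E; rewrite E eqxx in xw.
case/andP=> xz pp3 lp sh.
exists (last u p1), z; split => //.
- apply/eqP => E; have := sh (p1 ++ p3).
  rewrite /is_walk cat_path last_cat pp1 E pp3 lp eqxx !size_cat /= => /(_ isT).
  by rewrite leq_add2l ltnNge leqW.
- apply/negP => yz; have := sh (p1 ++ z :: p3).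
  rewrite /is_walk cat_path last_cat pp1 /= yz pp3 lp eqxx !size_cat /= => /(_ isT).
  by rewrite leq_add2l ltnn.
Qed.

Lemma simplicial_in_geodetic (T : {set W}) x :
  (forall y z, r y x -> r x z -> y = z \/ r y z) -> geodetic_set r T -> x \in T.
Proof.
move=> clique /(_ x) [u [w [uT wT g]]].
case: (eqVneq x u) => [->//|xu]; case: (eqVneq x w) => [->//|xw].
have [y [z [yx xz yz nyz]]] := on_geodesic_inner g xu xw.
by case: (clique y z yx xz) => [E|ryz]; [rewrite E eqxx in yz | rewrite ryz in nyz].
Qed.

Hypothesis r_sym : symmetric r.

Lemma on_geodesic_near u w x m : m = u \/ r m u -> m = w \/ r m w ->
  on_geodesic r u w x -> x != u -> x != w ->
  [/\ r u x, r x w, u != w & ~~ r u w].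
Proof.
move=> mu mw [p [[/andP [pp /eqP lp] sh] xp]] xu xw.
have short_walk : exists2 q, is_walk r u w q & size q <= 2.
  rewrite /is_walk; case: mu mw => [<-|mu] [<-|mw].
  - by exists [::] => //=.
  - by exists [:: w] => //=; rewrite mw eqxx.
  - by exists [:: m] => //=; rewrite r_sym mu eqxx.
  - by exists [:: m; w] => //=; rewrite r_sym mu mw eqxx.
have [q wq /(leq_trans (sh q wq)) sp] := short_walk.
rewrite inE (negbTE xu) /= in xp.
case: p pp lp sh xp sp => [|y [|y' [|y'' q']]] //=.
- by move=> _ E _; rewrite inE => /eqP Ex; rewrite Ex E eqxx in xw.
- move=> /and3P [uy yy' _] E sh; subst w.
  rewrite !inE (negbTE xw) orbF => /eqP -> _; split=> //.
  + by apply/eqP => E; have := sh [::]; rewrite /is_walk /= E eqxx => /(_ isT).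
  + by apply/negP => uw; have := sh [:: y']; rewrite /is_walk /= uw eqxx => /(_ isT).
Qed.

End Geodesics.

Lemma ex_min_card (X : finType) (P : {set X} -> Prop) (A : {set X}) : P A ->
  exists S, P S /\ forall S', P S' -> #|S| <= #|S'|.
Proof.
have [n ltAn] := ubnP #|A|; elim: n A ltAn => // n IH A; rewrite ltnS => leAn PA.
case: (classic (exists2 B, P B & #|B| < #|A|)) => [[B PB ltBA]|none].
- exact: (IH B (leq_trans ltBA leAn)).
- exists A; split=> // B PB; rewrite leqNgt; apply/negP => ltBA; apply: none.
  by exists B.
Qed.

Section LineGraph.
Variables (V : finType) (h : rel V).
Local Notation L := (@line_rel _ h).

Lemma edgeP (f : edge_type h) : exists x y, h x y /\ val f = [set x; y].
Proof. by case: f => s /= /existsP [x /existsP [y /andP [hxy /eqP E]]]; exists x, y. Qed.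

Lemma edge_eq2 (f : edge_type h) p q :
  p \in val f -> q \in val f -> p != q -> val f = [set p; q].
Proof.
have [x [y [_ ->]]] := edgeP f; rewrite !in_set2.
by case/orP=> /eqP ->; case/orP=> /eqP ->; rewrite ?eqxx // setUC.
Qed.

Lemma line_relI (f g : edge_type h) p q :
  p \in val f -> p \in val g -> q \in val f -> q \notin val g -> L f g.
Proof.
move=> pf pg qf qg; apply/andP; split; first by apply: contraNneq qg => <-.
by apply/set0Pn; exists p; rewrite inE pf pg.
Qed.

Lemma eq_or_line_rel (f g : edge_type h) p :
  p \in val f -> p \in val g -> f = g \/ L f g.
Proof.
move=> pf pg; case: (eqVneq (val f) (val g)) => [/val_inj|ne]; first by left.
by right; apply/andP; split => //; apply/set0Pn; exists p; rewrite inE pf pg.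
Qed.

Lemma line_rel_meet (f g : edge_type h) : L f g -> exists2 p, p \in val f & p \in val g.
Proof. by case/andP=> _ /set0Pn [p]; rewrite inE => /andP [pf pg]; exists p. Qed.

Lemma line_rel_sym : symmetric L.
Proof. by move=> f g; rewrite /line_rel eq_sym setIC. Qed.

Lemma line_rel_2path (u x w : edge_type h) : L u x -> L x w -> u != w -> ~~ L u w ->
  exists p q, [/\ p \in val u, q \in val w, p != q & val x = [set p; q]].
Proof.
move=> ux xw uw nuw.
have [p pu px] := line_rel_meet ux; have [q qx qw] := line_rel_meet xw.
have pq : p != q.
  by apply/eqP => Epq; subst q; case: (eq_or_line_rel pu qw) => [/eqP|]; apply/negP.
by exists p, q; split; last exact: edge_eq2.
Qed.

Lemma line_edge_between (x f g : edge_type h) p q :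
  val x = [set p; q] -> p != q -> p \in val f -> q \in val g ->
  (forall m, m \in val f -> m \in val g -> m \in val x) ->
  [\/ f = x, g = x | on_geodesic L f g x].
Proof.
move=> Ex pq pf qg common.
have px : p \in val x by rewrite Ex in_set2 eqxx.
have qx : q \in val x by rewrite Ex in_set2 eqxx orbT.
case: (boolP (q \in val f)) => qf.
  by apply: Or31; apply: val_inj; rewrite Ex; exact: edge_eq2.
case: (boolP (p \in val g)) => pg.
  by apply: Or32; apply: val_inj; rewrite Ex; exact: edge_eq2.
apply: Or33; apply: on_geodesic_dist2.
- by rewrite line_rel_sym; exact: (line_relI px pf qx qf).
- exact: (line_relI qx qg px pg).
- by apply: contraNneq pg => <-.
- apply/negP => /line_rel_meet [m mf mg].
  move: (common m mf mg); rewrite Ex in_set2 => /orP [] /eqP Em; subst m.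
  + by rewrite mg in pg.
  + by rewrite mf in qf.
Qed.

Hypothesis h_sym : symmetric h.

Lemma edge_other (f : edge_type h) p : p \in val f -> exists q, h p q /\ val f = [set p; q].
Proof.
have [x [y [hxy ->]]] := edgeP f; rewrite in_set2 => /orP [] /eqP ->.
- by exists y.
- by exists x; rewrite setUC h_sym.
Qed.

Lemma edge_adj (f : edge_type h) p q : p \in val f -> q \in val f -> p != q -> h p q.
Proof.
have [x [y [hxy ->]]] := edgeP f; rewrite !in_set2.
by case/orP=> /eqP ->; case/orP=> /eqP ->; rewrite ?eqxx // h_sym.
Qed.

Section PendantEdge.
Variables (f : edge_type h) (p q : V).
Hypotheses (Ef : val f = [set p; q]) (p_leaf : forall q', h p q' -> q' = q).

Lemma pendant_edge_nbr (g : edge_type h) : L g f -> q \in val g.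
Proof.
case/line_rel_meet => s sg; rewrite Ef in_set2 => /orP [] /eqP Es; subst s => //.
by have [q' [/p_leaf -> ->]] := edge_other sg; rewrite in_set2 eqxx orbT.
Qed.

Lemma pendant_edge_simplicial (y z : edge_type h) : L y f -> L f z -> y = z \/ L y z.
Proof.
move=> yf fz; apply: (eq_or_line_rel (p := q)); first exact: pendant_edge_nbr.
by apply: pendant_edge_nbr; rewrite line_rel_sym.
Qed.

End PendantEdge.
End LineGraph.

Definition va (T : finType) : HV T := inr (@Ordinal 4 0 isT).
Definition vd (T : finType) : HV T := inr (@Ordinal 4 3 isT).

Lemma HV_cases (T : finType) (x : HV T) :
  (exists s, x = inl s) \/ [\/ x = va T, x = vb T, x = vc T | x = vd T].
Proof.
case: x => [s|[[|[|[|[|m]]]] lt4]] //; [by left; exists s | right..].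
- by apply: Or41; congr inr; apply: val_inj.
- by apply: Or42; congr inr; apply: val_inj.
- by apply: Or43; congr inr; apply: val_inj.
- by apply: Or44; congr inr; apply: val_inj.
Qed.

Section HG.
Variables (T : finType) (e : rel T).
Local Notation ET := (edge_type (Hrel e)).
Local Notation R := (@line_rel _ (Hrel e)).

Lemma Hrel_sym : symmetric e -> symmetric (Hrel e).
Proof.
move=> e_sym x y.
case: (HV_cases x) => [[s ->]|[]->]; case: (HV_cases y) => [[t ->]|[]->] //=.
Qed.

Lemma Hrel_a x : Hrel e (va T) x -> x = vb T.
Proof. by case: (HV_cases x) => [[s ->]|[]->]. Qed.

Lemma Hrel_d x : Hrel e (vd T) x -> x = vc T.
Proof. by case: (HV_cases x) => [[s ->]|[]->]. Qed.

Lemma Hrel_edge x y : Hrel e x y -> is_edge (Hrel e) [set x; y].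
Proof. by move=> hxy; apply/existsP; exists x; apply/existsP; exists y; rewrite hxy eqxx. Qed.

Definition mkE x y (hxy : Hrel e x y) : ET := exist _ [set x; y] (Hrel_edge hxy).

Definition eab : ET := mkE (x := va T) (y := vb T) isT.
Definition ecd : ET := mkE (x := vc T) (y := vd T) isT.
Definition eb v : ET := mkE (x := vb T) (y := inl v) isT.
Definition ec v : ET := mkE (x := vc T) (y := inl v) isT.

Definition Gedge (f : ET) : bool := val f \subset inl @: [set: T].

Lemma Gedge_inl (f : ET) x : Gedge f -> x \in val f -> exists s, x = inl s.
Proof. by move/subsetP => Gf /Gf /imsetP [s _ ->]; exists s. Qed.

Lemma Eprime_form (f : ET) : f \in Eprime e ->
  exists v, val f = [set vb T; inl v] \/ val f = [set vc T; inl v].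
Proof. by rewrite inE => /existsP [v /orP [] /eqP E]; exists v; [left|right]. Qed.

Lemma edge_cases (f : ET) :
  [\/ val f = [set va T; vb T], val f = [set vc T; vd T], f \in Eprime e
    | exists s t, e s t /\ val f = [set inl s; inl t]].
Proof.
have [x [y [hxy Ef]]] := edgeP f; rewrite Ef.
have inE' v z : z = vb T \/ z = vc T -> val f = [set z; inl v] -> f \in Eprime e.
  by move=> zbc E; rewrite inE; apply/existsP; exists v; rewrite E; case: zbc => ->;
    rewrite eqxx ?orbT.
case: (HV_cases x) Ef hxy => [[s ->]|[]->]; case: (HV_cases y) => [[t ->]|[]->] //= Ef hxy.
- by apply: Or44; exists s, t.
- by apply: Or43; apply: (inE' s (vb T)); [left | rewrite setUC].
- by apply: Or43; apply: (inE' s (vc T)); [right | rewrite setUC].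
- exact: Or41.
- by apply: Or43; apply: (inE' t (vb T)); [left|].
- by apply: Or41; rewrite setUC.
- by apply: Or43; apply: (inE' t (vc T)); [right|].
- exact: Or42.
- by apply: Or42; rewrite setUC.
Qed.

Lemma Gedge_of (f : ET) s t : val f = [set inl s; inl t] -> Gedge f.
Proof.
move=> Ef; apply/subsetP => x; rewrite Ef in_set2 => /orP [] /eqP ->;
  exact/imset_f/in_setT.
Qed.

Lemma Gedge_notin_Eprime (f : ET) : Gedge f -> f \notin Eprime e.
Proof.
move=> Gf; apply/negP => /Eprime_form [v [] Ef];
  by move: Gf; rewrite /Gedge Ef subUset sub1set => /andP [/imsetP [s]].
Qed.

Lemma eab_notin_Eprime : eab \notin Eprime e.
Proof.
have : va T \in val eab by rewrite in_set2 eqxx.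
by apply: contraL => /Eprime_form [v [] ->]; rewrite in_set2.
Qed.

Lemma ecd_notin_Eprime : ecd \notin Eprime e.
Proof.
have : vd T \in val ecd by rewrite in_set2 eqxx orbT.
by apply: contraL => /Eprime_form [v [] ->]; rewrite in_set2.
Qed.

Lemma Eprime_inl_uniq (f : ET) s t :
  f \in Eprime e -> inl s \in val f -> inl t \in val f -> s = t.
Proof.
by case/Eprime_form => v [] ->; rewrite !in_set2 /= => /eqP [<-] /eqP [].
Qed.

Lemma notin_Eprime_Gedge (f : ET) s : f \notin Eprime e -> inl s \in val f -> Gedge f.
Proof.
case: (edge_cases f) => [->|->|->//|[t [u [_ /Gedge_of //]]]] _; by rewrite in_set2.
Qed.

Lemma edge_hits (f : ET) :
  [\/ vb T \in val f, vc T \in val f | exists s, inl s \in val f].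
Proof.
have [x [y [hxy Ef]]] := edgeP f.
have [xf yf] : x \in val f /\ y \in val f by rewrite Ef !in_set2 !eqxx orbT.
case: (HV_cases x) hxy xf => [[s ->] _ sf|[]-> hxy xf].
- by apply: Or33; exists s.
- by rewrite (Hrel_a hxy) in yf; apply: Or31.
- exact: Or31.
- exact: Or32.
- by rewrite (Hrel_d hxy) in yf; apply: Or32.
Qed.

Hypothesis e_sym : symmetric e.

Lemma eab_nbr (g : ET) : R g eab -> vb T \in val g.
Proof. exact: (pendant_edge_nbr (Hrel_sym e_sym) (f := eab) erefl (@Hrel_a)). Qed.

Lemma ecd_nbr (g : ET) : R g ecd -> vc T \in val g.
Proof.
exact: (pendant_edge_nbr (Hrel_sym e_sym) (f := ecd) (setUC _ _) (@Hrel_d)).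
Qed.

Lemma eab_in_geodetic (S : {set ET}) : line_geodetic_set S -> eab \in S.
Proof.
apply: simplicial_in_geodetic.
exact: (pendant_edge_simplicial (Hrel_sym e_sym) (f := eab) erefl (@Hrel_a)).
Qed.

Lemma ecd_in_geodetic (S : {set ET}) : line_geodetic_set S -> ecd \in S.
Proof.
apply: simplicial_in_geodetic.
exact: (pendant_edge_simplicial (Hrel_sym e_sym) (f := ecd) (setUC _ _) (@Hrel_d)).
Qed.

Lemma Eprime_near (g f : ET) : f \in Eprime e ->
  exists m, (m = f \/ R m f) /\ (m = g \/ R m g).
Proof.
case/Eprime_form => v Ef.
have near_by (m : ET) p q : p \in val m -> p \in val f -> q \in val m -> q \in val g ->
    (m = f \/ R m f) /\ (m = g \/ R m g).
  by move=> pm pf qm qg; split; [exact: eq_or_line_rel pm pf | exact: eq_or_line_rel qm qg].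
have vf : inl v \in val f by case: Ef => ->; rewrite in_set2 eqxx orbT.
case: (edge_hits g) => [bg|cg|[s sg]].
- by exists (eb v); apply: (near_by _ (inl v) (vb T)); rewrite ?in_set2 ?eqxx ?orbT.
- by exists (ec v); apply: (near_by _ (inl v) (vc T)); rewrite ?in_set2 ?eqxx ?orbT.
- case: Ef => Ef.
  + by exists (eb s); apply: (near_by _ (vb T) (inl s)); rewrite ?Ef ?in_set2 ?eqxx ?orbT.
  + by exists (ec s); apply: (near_by _ (vc T) (inl s)); rewrite ?Ef ?in_set2 ?eqxx ?orbT.
Qed.

Lemma Eprime_on_geodesic (f : ET) : f \in Eprime e -> on_geodesic R eab ecd f.
Proof.
case/Eprime_form => v Ef.
have [ebv ecv] : on_geodesic R eab ecd (eb v) /\ on_geodesic R eab ecd (ec v).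
  apply: on_geodesic_dist3.
  - by apply: (line_relI (p := vb T) (q := va T)); rewrite ?in_set2 ?eqxx ?orbT.
  - by apply: (line_relI (p := inl v) (q := vb T)); rewrite ?in_set2 ?eqxx ?orbT.
  - by apply: (line_relI (p := vc T) (q := inl v)); rewrite ?in_set2 ?eqxx ?orbT.
  - by apply/eqP => /(congr1 val)/setP/(_ (va T)); rewrite !in_set2.
  - apply/negP => /line_rel_meet [p]; rewrite !in_set2.
    by case: (HV_cases p) => [[s ->]|[]->].
  - move=> m; rewrite line_rel_sym => /eab_nbr bm /ecd_nbr cm.
    by have := edge_adj (Hrel_sym e_sym) bm cm isT.
by case: Ef => Ef; [rewrite (_ : f = eb v) | rewrite (_ : f = ec v)] => //; apply: val_inj.
Qed.

(* [eab] is only a default: it is picked when the G-endpoint of [f] is isolated. *)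
Definition Gedge_at (f : ET) : ET := odflt eab [pick g | Gedge g & val f :&: val g != set0].

Definition swap (f : ET) : ET := if f \in Eprime e then Gedge_at f else f.

Lemma swap_id (f : ET) : f \notin Eprime e -> swap f = f.
Proof. by rewrite /swap => /negbTE ->. Qed.

Lemma swap_notin_Eprime (f : ET) : swap f \notin Eprime e.
Proof.
rewrite /swap; case: ifPn => // _; rewrite /Gedge_at.
case: pickP => [g /andP [Gg _]|_] /=; [exact: Gedge_notin_Eprime | exact: eab_notin_Eprime].
Qed.

Lemma swap_Gedge (f g : ET) s : inl s \in val f -> Gedge g -> inl s \in val g ->
  Gedge (swap f) /\ inl s \in val (swap f).
Proof.
move=> sf Gg sg; rewrite /swap; case: ifPn => fE; last first.
  by split=> //; exact: notin_Eprime_Gedge fE sf.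
rewrite /Gedge_at; case: pickP => [g' /andP [Gg' /set0Pn [x]]|none] /=.
- rewrite inE => /andP [xf xg']; have [t Ex] := Gedge_inl Gg' xg'; subst x.
  by rewrite (Eprime_inl_uniq fE sf xf).
- have : Gedge g && (val f :&: val g != set0).
    by rewrite Gg; apply/set0Pn; exists (inl s); rewrite inE sf sg.
  by rewrite none.
Qed.

Hypothesis e_tf : triangle_free e.

(* Triangle-freeness of G: two G-edges at the ends r and t of the G-edge x can only
   share a vertex of x. *)
Lemma Gedge_on_geodesic (x f g : ET) r t : val x = [set inl r; inl t] -> r != t ->
  Gedge f -> inl r \in val f -> inl t \in val g ->
  [\/ f = x, g = x | on_geodesic R f g x].
Proof.
move=> Ex rt Gf rf tg.
have adj := @edge_adj _ _ (Hrel_sym e_sym).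
have ert : e r t by apply: (adj x (inl r) (inl t)); rewrite ?Ex ?in_set2 ?eqxx ?orbT.
apply: (line_edge_between Ex) => // m mf mg.
have [s Em] := Gedge_inl Gf mf; subst m.
rewrite Ex !in_set2 /=; apply/negPn/negP; rewrite negb_or => /andP [sr st].
apply: (e_tf (x := r) (y := s) (z := t)); rewrite ert andbT.
by apply/andP; split; [apply: (adj f (inl r) (inl s)) | apply: (adj g (inl s) (inl t))];
  rewrite // eq_sym.
Qed.

Section SwapGeodetic.
Variable S : {set ET}.
Hypothesis geoS : line_geodetic_set S.

Lemma swap_covers_mid (u w x : ET) : u \in S -> w \in S -> Gedge x ->
  R u x -> R x w -> u != w -> ~~ R u w ->
  exists a b, [/\ a \in swap @: S, b \in swap @: S & on_geodesic R a b x].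
Proof.
move=> uS wS Gx ux xw uw nuw.
have [p [q [pu qw pq Ex]]] := line_rel_2path ux xw uw nuw.
have [px qx] : p \in val x /\ q \in val x by rewrite Ex !in_set2 !eqxx orbT.
have [[r Ep] [t Eq]] := conj (Gedge_inl Gx px) (Gedge_inl Gx qx); subst p q.
have [Gu ru] := swap_Gedge pu Gx px.
have [_ tw] := swap_Gedge qw Gx qx.
have [uS' wS'] : swap u \in swap @: S /\ swap w \in swap @: S by rewrite !imset_f.
case: (Gedge_on_geodesic Ex pq Gu ru tw) => [<-|<-|geo].
- by exists (swap u), (swap u); split=> //; exact: on_geodesic_refl.
- by exists (swap w), (swap w); split=> //; exact: on_geodesic_refl.
- by exists (swap u), (swap w).
Qed.

Lemma swap_covers_Gedge (x : ET) : Gedge x ->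
  exists a b, [/\ a \in swap @: S, b \in swap @: S & on_geodesic R a b x].
Proof.
move=> Gx; have xE := Gedge_notin_Eprime Gx.
case: (boolP (x \in S)) => xS.
  exists x, x; rewrite -(swap_id xE) imset_f //; split=> //; exact: on_geodesic_refl.
have [u [w [uS wS g]]] := geoS x.
have [xu xw] : x != u /\ x != w by split; apply: contraNneq xS => ->.
case: (boolP ((u \in Eprime e) || (w \in Eprime e))) => [uwE|]; last first.
  rewrite negb_or => /andP [uE wE]; exists u, w.
  by rewrite -{1}(swap_id uE) -{1}(swap_id wE) !imset_f.
have [m [mu mw]] : exists m, (m = u \/ R m u) /\ (m = w \/ R m w).
  case/orP: uwE => [uE|wE]; first exact: Eprime_near uE.
  by have [m [mw mu]] := Eprime_near u wE; exists m.
have [ux xw' uw nuw] := on_geodesic_near (@line_rel_sym _ _) mu mw g xu xw.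
exact: swap_covers_mid uS wS Gx ux xw' uw nuw.
Qed.

Lemma swap_geodetic : line_geodetic_set (swap @: S).
Proof.
move=> x.
have inS f : f \in S -> f \notin Eprime e -> f \in swap @: S.
  by move=> fS fE; rewrite -(swap_id fE) imset_f.
have abS := inS _ (eab_in_geodetic geoS) eab_notin_Eprime.
have cdS := inS _ (ecd_in_geodetic geoS) ecd_notin_Eprime.
case: (edge_cases x) => [Ex|Ex|xE|[s [t [_ /Gedge_of Gx]]]].
- rewrite (_ : x = eab); last exact: val_inj.
  by exists eab, eab; split=> //; exact: on_geodesic_refl.
- rewrite (_ : x = ecd); last exact: val_inj.
  by exists ecd, ecd; split=> //; exact: on_geodesic_refl.
- by exists eab, ecd; split=> //; exact: Eprime_on_geodesic.
- exact: swap_covers_Gedge.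
Qed.

End SwapGeodetic.
End HG.

Theorem mainTheorem7 (T : finType) (e : rel T)
  (e_sym : symmetric e) (e_irr : irreflexive e) (e_tf : triangle_free e) :
  exists Q : {set edge_type (Hrel e)},
    [/\ line_geodetic_set Q,
        (forall S : {set edge_type (Hrel e)}, line_geodetic_set S -> #|Q| <= #|S|)
      & Q :&: Eprime e = set0].
Proof.
have geoT : line_geodetic_set [set: edge_type (Hrel e)].
  by move=> x; exists x, x; split; rewrite ?in_setT //; exact: on_geodesic_refl.
have [S [geoS minS]] := ex_min_card geoT.
exists (@swap T e @: S); split.
- exact: swap_geodetic.
- by move=> S' /minS; apply: leq_trans; exact: leq_imset_card.
- apply/setP => f; rewrite inE in_set0.
  by apply/andP => -[/imsetP [g _ ->]]; apply/negP; exact: swap_notin_Eprime.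
Qed.
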